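(* Let $X=\prod_{i=1}^d X_i$ and let $f,g$, $x^*_\eta$, the probabilities $p_1,\dots,p_d$, the constants $C_f,C_g$, the function $\mathcal L$ and the RB-IRG iterates $\{x_k\}$ be as described in the context. Let $\{\gamma_k\}$ and $\{\eta_k\}$ be positive, non-increasing sequences with $\gamma_0\eta_0<\frac{1}{\mu\, p_{\min}}$. Then for every $k\ge 1$, $$\mathbb E\big[\mathcal L(x_{k+1},x^*_{\eta_k})\,\big|\,\mathcal F_k\big]\le \big(1-\mu\gamma_k\eta_k p_{\min}\big)\mathcal L(x_k,x^*_{\eta_{k-1}})+\frac{2C_g^2}{p_{\min}^2\mu^3\gamma_k\eta_k}\Big(\frac{\eta_{k-1}}{\eta_k}-1\Big)^2+2\gamma_k^2\big(C_f^2+\eta_0^2C_g^2\big).$$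
   Context: $X=\prod_{i=1}^d X_i$ with each $X_i\subseteq\mathbb R^{n_i}$ nonempty, closed and convex, $\sum_i n_i=n$; for $x\in\mathbb R^n$, $x^{(i)}$ denotes its $i$-th block. $f,g:\mathbb R^n\to(-\infty,\infty]$ are proper convex (possibly nondifferentiable) functions, $g$ is $\mu$-strongly convex with $\mu>0$, and $X\subseteq\operatorname{int}(\operatorname{dom} f\cap\operatorname{dom} g)$. For $\eta>0$, $x^*_\eta$ denotes the unique minimizer of $f+\eta g$ over $X$. For $x\in X$, $\tilde\nabla f(x)\in\partial f(x)$ and $\tilde\nabla g(x)\in\partial g(x)$ are the subgradients used by the algorithm, and $\tilde\nabla_i f(x),\tilde\nabla_i g(x)$ their $i$-th blocks; there are constants $C_{f,i},C_{g,i}$ with $\|\tilde\nabla_i f(x)\|\le C_{f,i}$, $\|\tilde\nabla_i g(x)\|\le C_{g,i}$ for all $x\in X$, and $C_f=\sqrt{\sum_i C_{f,i}^2}$, $C_g=\sqrt{\sum_i C_{g,i}^2}$. Probabilities $p_1,\dots,p_d>0$ with $\sum_i p_i=1$; $p_{\min}=\min_i p_i$, $p_{\max}=\max_i p_i$. Algorithm RB-IRG: given $x_0\in X$, positive stepsizes $\gamma_k$, regularization parameters $\eta_k$ and a scalar $r$, set $S_0=\gamma_0^r$, $\bar x_0=x_0$; for $k=0,1,\dots$: draw $i_k\in\{1,\dots,d\}$ i.i.d. with $\mathrm{Prob}(i_k=i)=p_i$; set $x_{k+1}^{(i_k)}=\Pi_{X_{i_k}}\big(x_k^{(i_k)}-\gamma_k(\tilde\nabla_{i_k}f(x_k)+\eta_k\tilde\nabla_{i_k}g(x_k))\big)$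 (Euclidean projection) and $x_{k+1}^{(i)}=x_k^{(i)}$ for $i\ne i_k$; set $S_{k+1}=S_k+\gamma_{k+1}^r$, $\bar x_{k+1}=(S_k\bar x_k+\gamma_{k+1}^r x_{k+1})/S_{k+1}$. $\mathcal F_k$ denotes the information $\{i_0,\dots,i_{k-1}\}$ (conditioning is on the $\sigma$-algebra they generate). For $x,y\in\mathbb R^n$, $\mathcal L(x,y)=\sum_{i=1}^d p_i^{-1}\|x^{(i)}-y^{(i)}\|^2$. *)

From HB Require Import structures.
From mathcomp Require Import all_boot all_order all_algebra.
From mathcomp Require Import mathcomp_extra boolp classical_sets functions reals constructive_ereal.
Set Implicit Arguments. Unset Strict Implicit. Unset Printing Implicit Defensive.
Import Order.TTheory GRing.Theory Num.Theory.
Local Open Scope ring_scope.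
Local Open Scope classical_set_scope.

Section Defs.
Variables (R : realType) (d : nat) (n : 'I_d -> nat).

(* R^n with n = sum_i n_i, written as the product of the blocks R^{n_i}. *)
Definition bvec := forall i : 'I_d, 'rV[R]_(n i).

Definition badd (x y : bvec) : bvec := fun i => x i + y i.
Definition bscale (a : R) (x : bvec) : bvec := fun i => a *: x i.
Definition bsub (x y : bvec) : bvec := fun i => x i - y i.

Definition sqnorm m (v : 'rV[R]_m) : R := \sum_(j < m) v 0 j ^+ 2.
Definition bdot (x y : bvec) : R := \sum_i \sum_(j < n i) x i 0 j * y i 0 j.
Definition bsqnorm (x : bvec) : R := \sum_i sqnorm (x i).

Definition closed_set m (A : set 'rV[R]_m) :=
  forall v, ~ A v -> exists2 e : R, 0 < e & forall w, sqnorm (w - v) < e ^+ 2 -> ~ A w.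
Definition convex_set m (A : set 'rV[R]_m) :=
  forall u v (t : R), A u -> A v -> 0 <= t <= 1 -> A (t *: u + (1 - t) *: v).

Definition prod_set (Xs : forall i : 'I_d, set 'rV[R]_(n i)) : set bvec :=
  [set x | forall i, Xs i (x i)].

Definition proper_fun (f : bvec -> \bar R) :=
  (forall x, f x != -oo%E) /\ exists x, f x != +oo%E.
Definition convex_fun (f : bvec -> \bar R) :=
  forall x y (t : R), 0 <= t <= 1 ->
    (f (badd (bscale t x) (bscale (1 - t) y)) <= t%:E * f x + (1 - t)%:E * f y)%E.
Definition strongly_convex_fun (mu : R) (f : bvec -> \bar R) :=
  forall x y (t : R), 0 <= t <= 1 ->
    (f (badd (bscale t x) (bscale (1 - t) y))
      <= t%:E * f x + (1 - t)%:E * f y - (mu / 2 * t * (1 - t) * bsqnorm (bsub x y))%:E)%E.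
Definition dom (f : bvec -> \bar R) : set bvec := [set x | f x != +oo%E].
Definition interior (A : set bvec) : set bvec :=
  [set x | exists2 e : R, 0 < e & forall y, bsqnorm (bsub y x) < e ^+ 2 -> A y].

Definition is_subgrad (f : bvec -> \bar R) (x s : bvec) :=
  forall y, (f x + (bdot s (bsub y x))%:E <= f y)%E.

Definition is_minimizer (A : set bvec) (F : bvec -> \bar R) (x : bvec) :=
  A x /\ forall y, A y -> (F x <= F y)%E.

Definition is_proj m (A : set 'rV[R]_m) (z p : 'rV[R]_m) :=
  A p /\ forall y, A y -> sqnorm (z - p) <= sqnorm (z - y).

Definition Lfun (p : 'I_d -> R) (x y : bvec) : R :=
  \sum_i (p i)^-1 * sqnorm (x i - y i).

(* p_min (all p_i lie in (0,1], so 1 is a neutral start) *)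
Definition pmin (p : 'I_d -> R) : R := \big[Num.min/1]_i p i.

Definition Cnorm (C : 'I_d -> R) : R := Num.sqrt (\sum_i C i ^+ 2).

(* Probability of the cylinder event {i_0 = h_0, ..., i_{k-1} = h_{k-1}}
   for i.i.d. indices with law p. *)
Definition hprob (p : 'I_d -> R) (h : seq 'I_d) : R := \prod_(j <- h) p j.

(* Conditional expectation E[Y | F_k] evaluated on the atom {(i_0..i_{k-1}) = h}
   (size h = k), for a random variable Y = Y(i_0,...,i_k):
   E[Y 1_atom] / P(atom). *)
Definition cond_exp (p : 'I_d -> R) (Y : seq 'I_d -> R) (h : seq 'I_d) : R :=
  (\sum_(i : 'I_d) hprob p (rcons h i) * Y (rcons h i)) / hprob p h.

(* x : seq 'I_d -> bvec gives x_k as a function of the realized indices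
   (i_0,...,i_{k-1}); this says x is generated by RB-IRG. *)
Definition RBIRG_iterates (Xs : forall i : 'I_d, set 'rV[R]_(n i))
    (sf sg : bvec -> bvec) (gam eta : nat -> R) (x0 : bvec) (x : seq 'I_d -> bvec) :=
  x [::] = x0 /\
  forall (h : seq 'I_d) (i : 'I_d),
    is_proj (Xs i)
      (x h i - gam (size h) *: (sf (x h) i + eta (size h) *: sg (x h) i))
      (x (rcons h i) i)
    /\ forall j, j != i -> x (rcons h i) j = x h j.

End Defs.

From HB Require Import structures.
From mathcomp Require Import all_boot all_order all_algebra.
From mathcomp Require Import mathcomp_extra boolp classical_sets functions reals constructive_ereal.
From mathcomp Require Import ring lra.
Import Order.TTheory GRing.Theory Num.Theory.
Set Implicit Arguments. Unset Strict Implicit. Unset Printing Implicit Defensive.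
Local Open Scope ring_scope.
Local Open Scope classical_set_scope.

(** Since one step of RB-IRG moves only the block [i], chosen with probability
    [p_i], weighting the block errors by [1/p_i] makes the conditional expectation
    of [L] see the full projected subgradient step on the Tikhonov function
    [f + eta_k g].  Nonexpansiveness of the projections and the
    [mu eta_k]-strong monotonicity of its subgradients around the minimizer
    [x*_{eta_k}] contract [L(., x*_{eta_k})] by [1 - 2 mu gam_k eta_k p_min], up to
    the [gam_k^2] term.  Half of this contraction pays for moving the center back
    to [x*_{eta_{k-1}}], using the Lipschitz bound
    [mu eta |x*_{eta'} - x*_eta| <= (eta' - eta) C_g] along the path of Tikhonov
    minimizers. *)

Lemma le0_of_le_mul_small (R : realType) (a S : R) :
  (forall t, 0 < t <= 1 -> a <= t * S) -> a <= 0.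
Proof.
move=> le_aS; rewrite leNgt; apply/negP => a_gt0.
have Sa_gt0 : 0 < `|S| + a by rewrite ltr_wpDl.
set t := a / (2 * (`|S| + a)).
have t_gt0 : 0 < t by rewrite divr_gt0 // mulr_gt0.
have t_le1 : t <= 1 by rewrite ler_pdivrMr ?mulr_gt0 //; have := normr_ge0 S; lra.
have le_at_t := le_aS _ (introT andP (conj t_gt0 t_le1)).
have := le_trans le_at_t (ler_wpM2l (ltW t_gt0) (ler_norm S)).
rewrite -(ler_pM2r (mulr_gt0 (ltr0n _ 2) Sa_gt0)) mulrAC divfK ?gt_eqF ?mulr_gt0 //.
have := normr_ge0 S; nra.
Qed.

Lemma le_sqr_of_sqrt_le (R : realType) (s C : R) : 0 <= s -> Num.sqrt s <= C -> s <= C ^+ 2.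
Proof.
move=> s_ge0 le_sC; rewrite -(sqr_sqrtr s_ge0) !expr2.
by apply: ler_pM => //; apply: sqrtr_ge0.
Qed.

Section RowVectors.
Variables (R : realType) (m : nat).
Implicit Types (u v w z y P G : 'rV[R]_m) (A : set 'rV[R]_m) (a b c gam : R).

Definition dotv u v : R := \sum_(j < m) u 0 j * v 0 j.

Lemma sqnormE u : sqnorm u = dotv u u.
Proof. by apply: eq_bigr => j _; rewrite expr2. Qed.

Lemma dotvC u v : dotv u v = dotv v u.
Proof. by apply: eq_bigr => j _; rewrite mulrC. Qed.

Lemma dotvDl u v w : dotv (u + v) w = dotv u w + dotv v w.
Proof. by rewrite /dotv -big_split; apply: eq_bigr => j _; rewrite !mxE mulrDl. Qed.

Lemma dotvZl a u w : dotv (a *: u) w = a * dotv u w.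
Proof. by rewrite /dotv mulr_sumr; apply: eq_bigr => j _; rewrite !mxE mulrA. Qed.

Lemma dotvBl u v w : dotv (u - v) w = dotv u w - dotv v w.
Proof. by rewrite -scaleN1r dotvDl dotvZl mulN1r. Qed.

Lemma dotvDr u v w : dotv w (u + v) = dotv w u + dotv w v.
Proof. by rewrite dotvC dotvDl !(dotvC w). Qed.

Lemma dotvZr a u w : dotv w (a *: u) = a * dotv w u.
Proof. by rewrite dotvC dotvZl dotvC. Qed.

Lemma dotvBr u v w : dotv w (u - v) = dotv w u - dotv w v.
Proof. by rewrite dotvC dotvBl !(dotvC w). Qed.

Lemma sqnorm_ge0 u : 0 <= sqnorm u.
Proof. by apply: sumr_ge0 => j _; rewrite sqr_ge0. Qed.

Lemma sqnormD u v : sqnorm (u + v) = sqnorm u + 2 * dotv u v + sqnorm v.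
Proof. by rewrite !sqnormE dotvDl !dotvDr (dotvC v u); ring. Qed.

Lemma sqnormB u v : sqnorm (u - v) = sqnorm u - 2 * dotv u v + sqnorm v.
Proof. by rewrite !sqnormE dotvBl !dotvBr (dotvC v u); ring. Qed.

Lemma sqnormZ a u : sqnorm (a *: u) = a ^+ 2 * sqnorm u.
Proof. by rewrite !sqnormE dotvZl dotvZr mulrA -expr2. Qed.

Lemma sqnormBC u v : sqnorm (u - v) = sqnorm (v - u).
Proof. by rewrite !sqnormB (dotvC u v); ring. Qed.

Lemma dotv_young a b u v : 2 * a * b * dotv u v <= a ^+ 2 * sqnorm u + b ^+ 2 * sqnorm v.
Proof.
have := sqnorm_ge0 (a *: u - b *: v).
by rewrite sqnormB !sqnormZ dotvZl dotvZr => ?; lra.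
Qed.

(* The right side minus the left is [|c u - (1 - 2c) v|^2 + c (3 - 2c) |v|^2]. *)
Lemma sqnormD_recenter c u v : 0 < c -> 2 * c <= 3 ->
  c * (1 - 2 * c) * sqnorm (u + v) <= c * (1 - c) * sqnorm u + sqnorm v.
Proof.
move=> c_gt0 c_le.
have := sqnorm_ge0 (c *: u - (1 - 2 * c) *: v).
have : 0 <= c * (3 - 2 * c) * sqnorm v.
  by rewrite !mulr_ge0 ?sqnorm_ge0 //; lra.
rewrite sqnormD sqnormB !sqnormZ dotvZl dotvZr => ? ?; nra.
Qed.

Lemma proj_obtuse A z P y : convex_set A -> is_proj A z P -> A y ->
  dotv (z - P) (y - P) <= 0.
Proof.
move=> A_cvx [AP P_min] Ay.
apply: (@le0_of_le_mul_small _ _ (sqnorm (y - P) / 2)) => t /andP[t_gt0 t_le1].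
have := P_min _ (A_cvx _ _ _ Ay AP (introT andP (conj (ltW t_gt0) t_le1))).
have -> : z - (t *: y + (1 - t) *: P) = (z - P) - t *: (y - P).
  by apply/rowP => j; rewrite !mxE; ring.
rewrite (sqnormB (z - P)) sqnormZ dotvZr => le_proj.
by rewrite -(ler_pM2l t_gt0); lra.
Qed.

Lemma proj_sqnorm_le A z P y : convex_set A -> is_proj A z P -> A y ->
  sqnorm (P - y) <= sqnorm (z - y).
Proof.
move=> A_cvx P_proj Ay; have := proj_obtuse A_cvx P_proj Ay.
have -> : z - y = (z - P) - (y - P) by rewrite opprB addrA subrK.
rewrite (sqnormBC P) (sqnormB (z - P)); have := sqnorm_ge0 (z - P); lra.
Qed.

Lemma proj_step_sqnorm A z G gam P y : convex_set A ->
  is_proj A (z - gam *: G) P -> A y ->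
  sqnorm (P - y) <= sqnorm (z - y) - 2 * gam * dotv G (z - y) + gam ^+ 2 * sqnorm G.
Proof.
move=> A_cvx P_proj Ay; apply: le_trans (proj_sqnorm_le A_cvx P_proj Ay) _.
have -> : z - gam *: G - y = (z - y) - gam *: G by rewrite addrAC.
by rewrite (sqnormB (z - y)) sqnormZ dotvZr dotvC mulrA.
Qed.

End RowVectors.

Section Blocks.
Variables (R : realType) (d : nat) (n : 'I_d -> nat).
Implicit Types (u v w z s : bvec R n) (a t : R).

Lemma bdotE s u : bdot s u = \sum_i dotv (s i) (u i).
Proof. by []. Qed.

Lemma bsqnorm_ge0 u : 0 <= bsqnorm u.
Proof. by apply: sumr_ge0 => i _; apply: sqnorm_ge0. Qed.

Lemma bdotDl u v w : bdot (badd u v) w = bdot u w + bdot v w.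
Proof. by rewrite !bdotE -big_split; apply: eq_bigr => i _; rewrite dotvDl. Qed.

Lemma bdotZl a u w : bdot (bscale a u) w = a * bdot u w.
Proof. by rewrite !bdotE mulr_sumr; apply: eq_bigr => i _; rewrite dotvZl. Qed.

Lemma bdot_bsubC s z w : bdot s (bsub w z) = - bdot s (bsub z w).
Proof.
rewrite !bdotE -sumrN; apply: eq_bigr => i _.
by rewrite /bsub !dotvBr opprB.
Qed.

Lemma bsqnorm_bsubC z w : bsqnorm (bsub w z) = bsqnorm (bsub z w).
Proof. by apply: eq_bigr => i _; rewrite /bsub sqnormBC. Qed.

Lemma bsqnorm_bsubxx z : bsqnorm (bsub z z) = 0.
Proof.
rewrite /bsqnorm big1 // => i _; rewrite /bsub subrr /sqnorm big1 // => j _.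
by rewrite mxE expr0n.
Qed.

Lemma bdot_young a t u v : 2 * a * t * bdot u v <= a ^+ 2 * bsqnorm u + t ^+ 2 * bsqnorm v.
Proof.
rewrite bdotE /bsqnorm !mulr_sumr -big_split; apply: ler_sum => i _.
exact: dotv_young.
Qed.

Lemma bsqnorm_addZ_le u v a :
  bsqnorm (badd u (bscale a v)) <= 2 * bsqnorm u + 2 * a ^+ 2 * bsqnorm v.
Proof.
rewrite /bsqnorm !mulr_sumr -big_split; apply: ler_sum => i _ /=.
rewrite /badd /bscale sqnormD sqnormZ.
have := dotv_young 1 a (u i) (v i); rewrite dotvZr; nra.
Qed.

Lemma bdot_convex_comb s z w t :
  bdot s (bsub (badd (bscale t w) (bscale (1 - t) z)) z) = t * bdot s (bsub w z).
Proof.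
rewrite !bdotE mulr_sumr; apply: eq_bigr => i _.
rewrite /bsub /badd /bscale -dotvZr; congr dotv.
by apply/rowP => j; rewrite !mxE; ring.
Qed.

Lemma bsqnorm_le_Cnorm s (C : 'I_d -> R) :
  (forall i, Num.sqrt (sqnorm (s i)) <= C i) -> bsqnorm s <= Cnorm C ^+ 2.
Proof.
move=> le_sC; rewrite /Cnorm sqr_sqrtr ?sumr_ge0 // => [|i _]; last exact: sqr_ge0.
by apply: ler_sum => i _; apply: le_sqr_of_sqrt_le; [apply: sqnorm_ge0 | apply: le_sC].
Qed.

End Blocks.

Section ConvexOnSet.
Variables (R : realType) (d : nat) (n : 'I_d -> nat) (X : set (bvec R n)).
Implicit Types (F G : bvec R n -> R) (y z w s : bvec R n) (a b mu eta : R).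

Definition convex_bset := forall z w t, X z -> X w -> 0 <= t <= 1 ->
  X (badd (bscale t z) (bscale (1 - t) w)).

Definition strongly_convex_on mu F := forall z w t, X z -> X w -> 0 <= t <= 1 ->
  F (badd (bscale t z) (bscale (1 - t) w))
    <= t * F z + (1 - t) * F w - mu / 2 * t * (1 - t) * bsqnorm (bsub z w).

Definition subgrad_on F z s := forall w, X w -> F z + bdot s (bsub w z) <= F w.

Definition minimizer_on F y := X y /\ forall z, X z -> F y <= F z.

Lemma strongly_convex_onD a b eta F G : 0 <= eta ->
  strongly_convex_on a F -> strongly_convex_on b G ->
  strongly_convex_on (a + eta * b) (fun z => F z + eta * G z).
Proof.
move=> eta_ge0 F_cvx G_cvx z w t Xz Xw t01.
have := ler_wpM2l eta_ge0 (G_cvx z w t Xz Xw t01).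
have := F_cvx z w t Xz Xw t01; lra.
Qed.

Lemma subgrad_onD eta F G z s s' : subgrad_on F z s -> subgrad_on G z s' ->
  0 <= eta -> subgrad_on (fun z => F z + eta * G z) z (badd s (bscale eta s')).
Proof.
move=> sF sG eta_ge0 w Xw; rewrite bdotDl bdotZl.
have := ler_wpM2l eta_ge0 (sG w Xw); have := sF w Xw; lra.
Qed.

Hypothesis X_cvx : convex_bset.

Lemma subgrad_on_strong mu F z w s : strongly_convex_on mu F -> X z -> X w ->
  subgrad_on F z s -> F z + bdot s (bsub w z) + mu / 2 * bsqnorm (bsub w z) <= F w.
Proof.
move=> F_cvx Xz Xw s_sub; rewrite -subr_le0.
apply: (@le0_of_le_mul_small _ _ (mu / 2 * bsqnorm (bsub w z))) => t /andP[t_gt0 t_le1].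
have t01 : 0 <= t <= 1 by rewrite (ltW t_gt0) t_le1.
have sub_t := s_sub _ (X_cvx Xw Xz t01); rewrite bdot_convex_comb in sub_t.
have cvx_t := F_cvx w z t Xw Xz t01.
rewrite -(ler_pM2l t_gt0); lra.
Qed.

Lemma minimizer_on_growth mu F y z : strongly_convex_on mu F -> minimizer_on F y -> X z ->
  mu / 2 * bsqnorm (bsub z y) <= F z - F y.
Proof.
move=> F_cvx [Xy y_min] Xz; rewrite -subr_le0.
apply: (@le0_of_le_mul_small _ _ (mu / 2 * bsqnorm (bsub z y))) => t /andP[t_gt0 t_le1].
have t01 : 0 <= t <= 1 by rewrite (ltW t_gt0) t_le1.
have min_t := y_min _ (X_cvx Xz Xy t01).
have cvx_t := F_cvx z y t Xz Xy t01.
rewrite -(ler_pM2l t_gt0); lra.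
Qed.

Lemma minimizer_subgrad_strong mu F y z s : strongly_convex_on mu F -> minimizer_on F y ->
  X z -> subgrad_on F z s -> mu * bsqnorm (bsub z y) <= bdot s (bsub z y).
Proof.
move=> F_cvx y_min Xz s_sub.
have := minimizer_on_growth F_cvx y_min Xz.
have := subgrad_on_strong F_cvx Xz y_min.1 s_sub.
rewrite bdot_bsubC bsqnorm_bsubC; lra.
Qed.

End ConvexOnSet.

Lemma prod_set_convex (R : realType) (d : nat) (n : 'I_d -> nat)
    (Xs : forall i : 'I_d, set 'rV[R]_(n i)) :
  (forall i, convex_set (Xs i)) -> convex_bset (prod_set Xs).
Proof. by move=> Xs_cvx z w t Xz Xw t01 i; apply: Xs_cvx. Qed.

Section Tikhonov.
Variables (R : realType) (d : nat) (n : 'I_d -> nat) (X : set (bvec R n)).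
Variables (F G : bvec R n -> R) (mu : R).
Hypotheses (X_cvx : convex_bset X) (F_cvx : strongly_convex_on X 0 F)
  (G_cvx : strongly_convex_on X mu G).

Lemma tikhonov_strongly_convex eta : 0 <= eta ->
  strongly_convex_on X (mu * eta) (fun z => F z + eta * G z).
Proof. by move=> eta_ge0; rewrite mulrC -[eta * mu]add0r; apply: strongly_convex_onD. Qed.

Lemma tikhonov_subgrad_strong eta y z sF sG : 0 <= eta ->
  minimizer_on X (fun z => F z + eta * G z) y -> X z ->
  subgrad_on X F z sF -> subgrad_on X G z sG ->
  mu * eta * bsqnorm (bsub z y) <= bdot (badd sF (bscale eta sG)) (bsub z y).
Proof.
move=> eta_ge0 y_min Xz sF_sub sG_sub.
apply: (minimizer_subgrad_strong X_cvx (tikhonov_strongly_convex eta_ge0) y_min Xz).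
exact: subgrad_onD.
Qed.

Hypothesis mu_ge0 : 0 <= mu.

Lemma tikhonov_path_lipschitz eta eta' y y' s : 0 <= eta <= eta' ->
  minimizer_on X (fun z => F z + eta * G z) y ->
  minimizer_on X (fun z => F z + eta' * G z) y' -> subgrad_on X G y s ->
  (mu * eta) ^+ 2 * bsqnorm (bsub y' y) <= (eta' - eta) ^+ 2 * bsqnorm s.
Proof.
move=> /andP[eta_ge0 eta_le] y_min y'_min s_sub.
have growth := minimizer_on_growth X_cvx (tikhonov_strongly_convex eta_ge0) y_min y'_min.1.
have growth' := minimizer_on_growth X_cvx
  (tikhonov_strongly_convex (le_trans eta_ge0 eta_le)) y'_min y_min.1.
rewrite bsqnorm_bsubC in growth'.
have G_sub := s_sub _ y'_min.1.
have young := bdot_young (eta' - eta) (- (mu * eta)) s (bsub y' y).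
set D := bsqnorm (bsub y' y) in growth growth' young *.
set B := bdot s (bsub y' y) in G_sub young.
(* Adding both growth inequalities cancels [F] and leaves [(eta' - eta) (G y - G y')]. *)
have drift : mu * eta * D <= (eta' - eta) * - B.
  have : 0 <= mu * (eta' - eta) * D by rewrite !mulr_ge0 ?bsqnorm_ge0 ?subr_ge0.
  have : (eta' - eta) * (G y - G y') <= (eta' - eta) * - B.
    by rewrite ler_wpM2l ?subr_ge0 //; lra.
  lra.
have := ler_wpM2l (mulr_ge0 mu_ge0 eta_ge0) drift; lra.
Qed.

End Tikhonov.

Section FiniteRestriction.
Variables (R : realType) (d : nat) (n : 'I_d -> nat).
Implicit Types (f g : bvec R n -> \bar R) (A X : set (bvec R n)) (z s : bvec R n).

Lemma interior_subset A : interior A `<=` A.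
Proof. by move=> z [e e_gt0]; apply; rewrite bsqnorm_bsubxx exprn_gt0. Qed.

Lemma proper_fin_num f z : proper_fun f -> dom f z -> f z \is a fin_num.
Proof. by move=> [f_ninfty _] fz; rewrite fin_numE f_ninfty. Qed.

Lemma interior_dom_fin_num f g z : proper_fun f -> proper_fun g ->
  interior (dom f `&` dom g) z -> f z \is a fin_num /\ g z \is a fin_num.
Proof. by move=> f_prop g_prop /interior_subset[fz gz]; split; apply: proper_fin_num. Qed.

Lemma convex_fun_strongly0 f : convex_fun f -> strongly_convex_fun 0 f.
Proof. by move=> f_cvx z w t t01; rewrite !mul0r sube0; apply: f_cvx. Qed.

Variables (X : set (bvec R n)) (f : bvec R n -> \bar R).
Hypothesis f_fin : forall z, X z -> f z \is a fin_num.

Lemma fine_strongly_convex_on mu : convex_bset X -> strongly_convex_fun mu f ->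
  strongly_convex_on X mu (fun z => fine (f z)).
Proof.
move=> X_cvx f_cvx z w t Xz Xw t01; have := f_cvx z w t t01.
rewrite -[f z](fineK (f_fin Xz)) -[f w](fineK (f_fin Xw)).
rewrite -[f (badd _ _)](fineK (f_fin (X_cvx _ _ _ Xz Xw t01))) /=.
by rewrite -!EFinM -!EFinD lee_fin.
Qed.

Lemma fine_subgrad_on z s : X z -> is_subgrad f z s -> subgrad_on X (fun z => fine (f z)) z s.
Proof.
move=> Xz f_sub w Xw; have := f_sub w.
by rewrite -[f z](fineK (f_fin Xz)) -[f w](fineK (f_fin Xw)) /= -EFinD lee_fin.
Qed.

Lemma fine_minimizer_on g eta y : (forall z, X z -> g z \is a fin_num) ->
  is_minimizer X (fun z => f z + eta%:E * g z)%E y ->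
  minimizer_on X (fun z => fine (f z) + eta * fine (g z)) y.
Proof.
move=> g_fin [Xy y_min]; split=> // z Xz; have := y_min z Xz.
rewrite -[f z](fineK (f_fin Xz)) -[f y](fineK (f_fin Xy)).
by rewrite -[g z](fineK (g_fin _ Xz)) -[g y](fineK (g_fin _ Xy)) /= -!EFinM -!EFinD lee_fin.
Qed.

End FiniteRestriction.

Section Lfun.
Variables (R : realType) (d : nat) (n : 'I_d -> nat) (p : 'I_d -> R).
Hypothesis p_gt0 : forall i, 0 < p i.
Implicit Types (a y : bvec R n).

Lemma pmin_gt0 : 0 < pmin p.
Proof. by apply: (big_ind (fun v => 0 < v)) => // u v u_gt0 v_gt0; rewrite lt_min u_gt0. Qed.

Lemma pmin_le i : pmin p <= p i.
Proof. by rewrite /pmin (bigD1 i) //= ge_min lexx. Qed.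

Lemma pmin_Lfun_le a y : pmin p * Lfun p a y <= bsqnorm (bsub a y).
Proof.
rewrite /Lfun mulr_sumr; apply: ler_sum => i _; rewrite mulrA.
rewrite -[leRHS]mul1r ler_wpM2r ?sqnorm_ge0 //.
by rewrite ler_pdivrMr // mul1r pmin_le.
Qed.

Lemma Lfun_recenter c (a y y' : bvec R n) : 0 < c -> 2 * c <= 3 ->
  c * (1 - 2 * c) * Lfun p a y <= c * (1 - c) * Lfun p a y' + Lfun p y' y.
Proof.
move=> c_gt0 c_le; rewrite /Lfun !mulr_sumr -big_split; apply: ler_sum => i _ /=.
have -> : a i - y i = (a i - y' i) + (y' i - y i) by rewrite addrA subrK.
have pinv_ge0 : 0 <= (p i)^-1 by rewrite invr_ge0 ltW.
have := ler_wpM2l pinv_ge0 (sqnormD_recenter (a i - y' i) (y' i - y i) c_gt0 c_le).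
lra.
Qed.

Lemma Lfun_recenter_bound (a y y' : bvec R n) (mu gam eta eta' C : R) :
  0 < mu -> 0 < gam -> 0 < eta -> 2 * (mu * gam * eta * pmin p) <= 3 ->
  (mu * eta) ^+ 2 * bsqnorm (bsub y' y) <= (eta' - eta) ^+ 2 * C ->
  (1 - 2 * (mu * gam * eta * pmin p)) * Lfun p a y
    <= (1 - mu * gam * eta * pmin p) * Lfun p a y'
       + C / (pmin p ^+ 2 * mu ^+ 3 * gam * eta) * (eta' / eta - 1) ^+ 2.
Proof.
move=> mu_gt0 gam_gt0 eta_gt0 c_le drift.
have pm_gt0 := pmin_gt0; set c := mu * gam * eta * pmin p in c_le *.
have c_gt0 : 0 < c by rewrite !mulr_gt0.
have := Lfun_recenter a y y' c_gt0 c_le.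
suff : Lfun p y' y <= c * (C / (pmin p ^+ 2 * mu ^+ 3 * gam * eta) * (eta' / eta - 1) ^+ 2).
  by move=> ? ?; rewrite -(ler_pM2l c_gt0); lra.
have -> : c * (C / (pmin p ^+ 2 * mu ^+ 3 * gam * eta) * (eta' / eta - 1) ^+ 2)
    = (eta' - eta) ^+ 2 * C / (pmin p * (mu * eta) ^+ 2).
  by rewrite /c; field; rewrite !gt_eqF.
rewrite ler_pdivlMr ?mulr_gt0 ?exprn_gt0 ?mulr_gt0 //.
have := ler_wpM2l (sqr_ge0 (mu * eta)) (pmin_Lfun_le y' y); lra.
Qed.

Hypothesis p_sum1 : \sum_i p i = 1.

Lemma cond_exp_block_update (Y : seq 'I_d -> bvec R n) h y :
  (forall i j, j != i -> Y (rcons h i) j = Y h j) ->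
  cond_exp p (fun h' => Lfun p (Y h') y) h
    = Lfun p (Y h) y + \sum_i (sqnorm (Y (rcons h i) i - y i) - sqnorm (Y h i - y i)).
Proof.
move=> Y_block.
have hprob_gt0 : 0 < hprob p h by apply: prodr_gt0.
have Lfun_update i : p i * Lfun p (Y (rcons h i)) y
    = p i * Lfun p (Y h) y + (sqnorm (Y (rcons h i) i - y i) - sqnorm (Y h i - y i)).
  rewrite /Lfun (bigD1 i) // [in RHS](bigD1 i) //= !mulrDr !mulrA mulfV ?gt_eqF //.
  rewrite (eq_bigr (fun j => (p j)^-1 * sqnorm (Y h j - y j))) => [|j /Y_block -> //].
  ring.
rewrite /cond_exp.
under eq_bigr => i _ do rewrite /hprob big_rcons -/(hprob p h) -mulrA Lfun_update.
by rewrite -mulr_sumr big_split /= -mulr_suml p_sum1 mul1r mulrC mulKf ?gt_eqF.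
Qed.
End Lfun.

Definition irg_direction (R : realType) (d : nat) (n : 'I_d -> nat)
  (sf sg : bvec R n -> bvec R n) (e : R) (z : bvec R n) : bvec R n :=
  badd (sf z) (bscale e (sg z)).

Lemma irg_direction_le (R : realType) (d : nat) (n : 'I_d -> nat)
    (sf sg : bvec R n -> bvec R n) (Cf Cg : 'I_d -> R) (e e0 : R) (z : bvec R n) :
  (forall i, Num.sqrt (sqnorm (sf z i)) <= Cf i) ->
  (forall i, Num.sqrt (sqnorm (sg z i)) <= Cg i) -> 0 <= e <= e0 ->
  bsqnorm (irg_direction sf sg e z) <= 2 * (Cnorm Cf ^+ 2 + e0 ^+ 2 * Cnorm Cg ^+ 2).
Proof.
move=> /bsqnorm_le_Cnorm sf_le /bsqnorm_le_Cnorm sg_le /andP[e_ge0 e_le].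
apply: le_trans (bsqnorm_addZ_le _ _ _) _.
have e2_le : e ^+ 2 <= e0 ^+ 2 by rewrite lerXn2r // ?nnegrE (le_trans e_ge0).
have := ler_pM (sqr_ge0 e) (bsqnorm_ge0 (sg z)) e2_le sg_le; lra.
Qed.

Lemma nonincreasing_mul_lt1 (R : realType) (a : R) (gam eta : nat -> R) k : 0 < a ->
  (forall k, 0 < gam k) -> (forall k, gam k.+1 <= gam k) ->
  (forall k, 0 < eta k) -> (forall k, eta k.+1 <= eta k) ->
  gam 0%N * eta 0%N < 1 / a -> a * (gam k * eta k) < 1.
Proof.
move=> a_gt0 gam_gt0 gam_noninc eta_gt0 eta_noninc; rewrite ltr_pdivlMr // => lt1.
apply: le_lt_trans lt1; rewrite mulrC ler_wpM2r ?(ltW a_gt0) //.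
apply: ler_pM; [exact: ltW | exact: ltW | |];
  exact: Order.NatMonotonyTheory.nonincnP _ _ _ (leq0n k).
Qed.

Section RBIRG.
Variables (R : realType) (d : nat) (n : 'I_d -> nat) (Xs : forall i : 'I_d, set 'rV[R]_(n i)).
Arguments Xs : clear implicits.
Variables (sf sg : bvec R n -> bvec R n) (gam eta : nat -> R).
Variables (x0 : bvec R n) (x : seq 'I_d -> bvec R n).
Hypothesis x_iter : RBIRG_iterates Xs sf sg gam eta x0 x.
Implicit Types (h : seq 'I_d) (y : bvec R n).

Lemma RBIRG_iterates_in : prod_set Xs x0 -> forall h, prod_set Xs (x h).
Proof.
move=> x0X; have [x_nil x_step] := x_iter.
elim/last_ind => [|h i IH]; first by rewrite x_nil.
move=> j; have [[Xi _] x_other] := x_step h i.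
by case: (eqVneq j i) => [->|ne]; [exact: Xi | rewrite x_other].
Qed.

Lemma RBIRG_step_sqnorm k h y : size h = k ->
  (forall i, convex_set (Xs i)) -> prod_set Xs y ->
  \sum_i (sqnorm (x (rcons h i) i - y i) - sqnorm (x h i - y i))
    <= - (2 * gam k) * bdot (irg_direction sf sg (eta k) (x h)) (bsub (x h) y)
       + gam k ^+ 2 * bsqnorm (irg_direction sf sg (eta k) (x h)).
Proof.
move=> <- Xs_cvx Xy; rewrite bdotE /bsqnorm !mulr_sumr -big_split; apply: ler_sum => i _ /=.
have := proj_step_sqnorm (Xs_cvx i) (x_iter.2 h i).1 (Xy i).
rewrite /irg_direction /badd /bscale /bsub; lra.
Qed.

Lemma RBIRG_expected_descent (p : 'I_d -> R) k h y (mu B : R) :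
  (forall i, 0 < p i) -> \sum_i p i = 1 -> size h = k ->
  (forall i, convex_set (Xs i)) -> prod_set Xs y ->
  0 <= mu -> 0 <= gam k -> 0 <= eta k ->
  mu * eta k * bsqnorm (bsub (x h) y) <= bdot (irg_direction sf sg (eta k) (x h)) (bsub (x h) y) ->
  bsqnorm (irg_direction sf sg (eta k) (x h)) <= B ->
  cond_exp p (fun h' => Lfun p (x h') y) h
    <= (1 - 2 * (mu * gam k * eta k * pmin p)) * Lfun p (x h) y + gam k ^+ 2 * B.
Proof.
move=> p_gt0 p_sum1 hk Xs_cvx Xy mu_ge0 gam_ge0 eta_ge0 monotone B_bound.
rewrite cond_exp_block_update // => [|i j]; last exact: (x_iter.2 h i).2.
have := RBIRG_step_sqnorm hk Xs_cvx Xy.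
have := ler_wpM2l (mulr_ge0 (ler0n _ 2) gam_ge0) monotone.
have := ler_wpM2l (sqr_ge0 (gam k)) B_bound.
have := ler_wpM2l (mulr_ge0 (mulr_ge0 gam_ge0 mu_ge0) eta_ge0) (pmin_Lfun_le p_gt0 (x h) y).
lra.
Qed.

End RBIRG.

Theorem lemma4 (R : realType) (d : nat) (n : 'I_d -> nat)
  (Xs : forall i : 'I_d, set 'rV[R]_(n i))
  (f g : (@bvec R d n) -> \bar R) (mu : R)
  (xstar : R -> (@bvec R d n))
  (sf sg : (@bvec R d n) -> (@bvec R d n)) (Cf Cg : 'I_d -> R)
  (p : 'I_d -> R) (gam eta : nat -> R) (x0 : (@bvec R d n)) (x : seq 'I_d -> (@bvec R d n)) :
  (forall i, Xs i !=set0) ->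
  (forall i, closed_set (Xs i)) ->
  (forall i, convex_set (Xs i)) ->
  proper_fun f -> convex_fun f ->
  proper_fun g -> convex_fun g ->
  0 < mu -> strongly_convex_fun mu g ->
  prod_set Xs `<=` interior (dom f `&` dom g) ->
  (forall et : R, 0 < et ->
     is_minimizer (prod_set Xs) (fun z => (f z + et%:E * g z)%E) (xstar et)) ->
  (forall z, prod_set Xs z -> is_subgrad f z (sf z)) ->
  (forall z, prod_set Xs z -> is_subgrad g z (sg z)) ->
  (forall z i, prod_set Xs z -> Num.sqrt (sqnorm (sf z i)) <= Cf i) ->
  (forall z i, prod_set Xs z -> Num.sqrt (sqnorm (sg z i)) <= Cg i) ->
  (forall i, 0 < p i) -> \sum_i p i = 1 ->
  (forall k, 0 < gam k) -> (forall k, gam k.+1 <= gam k) ->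
  (forall k, 0 < eta k) -> (forall k, eta k.+1 <= eta k) ->
  gam 0%N * eta 0%N < 1 / (mu * pmin p) ->
  prod_set Xs x0 ->
  RBIRG_iterates Xs sf sg gam eta x0 x ->
  forall (k : nat) (h : seq 'I_d), (1 <= k)%N -> size h = k ->
    cond_exp p (fun h' => Lfun p (x h') (xstar (eta k))) h
    <= (1 - mu * gam k * eta k * pmin p) * Lfun p (x h) (xstar (eta k.-1))
       + 2 * Cnorm Cg ^+ 2 / (pmin p ^+ 2 * mu ^+ 3 * gam k * eta k)
           * (eta k.-1 / eta k - 1) ^+ 2
       + 2 * gam k ^+ 2 * (Cnorm Cf ^+ 2 + eta 0%N ^+ 2 * Cnorm Cg ^+ 2).

Proof.
move=> _ _ Xs_cvx f_prop f_cvx g_prop _ mu_gt0 g_scvx Xdom xstar_min sf_sub sg_sub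
  sf_bnd sg_bnd p_gt0 p_sum1 gam_gt0 gam_noninc eta_gt0 eta_noninc step_small x0X
  x_iter [//|k] h _ hk /=.
set X := prod_set Xs; have X_cvx : convex_bset X := prod_set_convex Xs_cvx.
have f_fin z (Xz : X z) := (interior_dom_fin_num f_prop g_prop (Xdom z Xz)).1.
have g_fin z (Xz : X z) := (interior_dom_fin_num f_prop g_prop (Xdom z Xz)).2.
have F_cvx := fine_strongly_convex_on f_fin X_cvx (convex_fun_strongly0 f_cvx).
have G_cvx := fine_strongly_convex_on g_fin X_cvx g_scvx.
have Phi_min e (e_gt0 : 0 < e) := fine_minimizer_on f_fin g_fin (xstar_min e e_gt0).
have y_min := Phi_min _ (eta_gt0 k.+1); have y'_min := Phi_min _ (eta_gt0 k).
have xk_in := RBIRG_iterates_in x_iter x0X h.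
have eta_le : 0 <= eta k.+1 <= eta 0%N.
  by rewrite ltW //; apply: Order.NatMonotonyTheory.nonincnP.
have c_lt1 : mu * pmin p * (gam k.+1 * eta k.+1) < 1.
  by apply: nonincreasing_mul_lt1; rewrite ?mulr_gt0 ?pmin_gt0.
have c_le : 2 * (mu * gam k.+1 * eta k.+1 * pmin p) <= 3 by lra.
have descent := RBIRG_expected_descent x_iter p_gt0 p_sum1 hk Xs_cvx y_min.1
  (ltW mu_gt0) (ltW (gam_gt0 _)) (ltW (eta_gt0 _))
  (tikhonov_subgrad_strong X_cvx F_cvx G_cvx (ltW (eta_gt0 _)) y_min xk_in
     (fine_subgrad_on f_fin xk_in (sf_sub _ xk_in)) (fine_subgrad_on g_fin xk_in (sg_sub _ xk_in)))
  (irg_direction_le (sf_bnd _ ^~ xk_in) (sg_bnd _ ^~ xk_in) eta_le).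
have drift := tikhonov_path_lipschitz X_cvx F_cvx G_cvx (ltW mu_gt0)
  (introT andP (conj (ltW (eta_gt0 _)) (eta_noninc k))) y_min y'_min
  (fine_subgrad_on g_fin y_min.1 (sg_sub _ y_min.1)).
have recenter := Lfun_recenter_bound p_gt0 (x h) mu_gt0 (gam_gt0 k.+1) (eta_gt0 _) c_le
  (le_trans drift (ler_wpM2l (sqr_ge0 _) (bsqnorm_le_Cnorm (sg_bnd _ ^~ y_min.1)))).
have : 0 <= Cnorm Cg ^+ 2 / (pmin p ^+ 2 * mu ^+ 3 * gam k.+1 * eta k.+1)
    * (eta k / eta k.+1 - 1) ^+ 2.
  by rewrite mulr_ge0 ?sqr_ge0 // divr_ge0 ?sqr_ge0 // ltW // !mulr_gt0 ?exprn_gt0 ?pmin_gt0.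
lra.
Qed.
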